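(* Let $G_1,\dots,G_n$ be groups and $G\leqslant G_1\times\dots\times G_n$ a subgroup such that each projection $G\to G_i$ is surjective. For $j\in\{1,\dots,n\}$ let $S_j=\{1,\dots,n\}\setminus\{j\}$, view $G$ as a subgroup of $G_j\times G_{S_j}$ (surjecting onto both factors), and let $Q_j=G_j/N_j$ be the associated Goursat quotient, where $N_j=\{x\in G_j:(x,1)\in G\}$. Then $G$ has abelian entanglements with respect to $G_1\times\dots\times G_n$ if and only if $Q_j$ is abelian for every $j\in\{1,\dots,n\}$.
   Context: For nonempty $S\subseteq\{1,\dots,n\}$, $G_S$ denotes the image of $G$ in $\prod_{i\in S}G_i$ (and $G_\emptyset$ is the trivial group). For a partition $\mathcal P=\{S,T\}$ of $\{1,\dots,n\}$ into two nonempty sets, $G\leqslant G_S\times G_T$ surjects onto both factors; with $N_S=\{x\in G_S:(x,1)\in G\}$ (normal in $G_S$) the Goursat quotient is $Q_{\mathcal P}=G_S/N_S$. $G$ has abelian entanglements with respect to $G_1\times\dots\times G_n$ if $Q_{\mathcal P}$ is abelian for every such partition $\mathcal P$. *)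

From mathcomp Require Import all_boot.

Set Implicit Arguments.
Unset Strict Implicit.
Unset Printing Implicit Defensive.

Record group := Group {
  carrier :> Type;
  gmul : carrier -> carrier -> carrier;
  ginv : carrier -> carrier;
  gone : carrier;
  gmulA : forall x y z, gmul x (gmul y z) = gmul (gmul x y) z;
  gmul1 : forall x, gmul gone x = x;
  gmulV : forall x, gmul (ginv x) x = gone
}.

Section Product.
Variables (n : nat) (Gs : 'I_n -> group).

Definition prodG := forall i : 'I_n, Gs i.
Definition pmul (x y : prodG) : prodG := fun i => gmul (x i) (y i).
Definition pinv (x : prodG) : prodG := fun i => ginv (x i).
Definition pone : prodG := fun i => gone (Gs i).

Definition is_subgroup (G : prodG -> Prop) : Prop :=
  [/\ G pone,
      forall x y, G x -> G y -> G (pmul x y)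
    & forall x, G x -> G (pinv x)].

(* Elements of prod_{i in S} G_i are represented by elements of prodG,
   where the coordinates outside S are irrelevant; two representatives
   denote the same element iff they agree on S. *)
Definition agree_on (S : {set 'I_n}) (x y : prodG) : Prop :=
  forall i, i \in S -> x i = y i.

Definition in_GS (G : prodG -> Prop) (S : {set 'I_n}) (x : prodG) : Prop :=
  exists g, G g /\ agree_on S g x.

Definition in_NS (G : prodG -> Prop) (S : {set 'I_n}) (x : prodG) : Prop :=
  exists g, [/\ G g, agree_on S g x & agree_on (~: S) g pone].

(* The Goursat quotient Q = G_S / N_S (T = complement of S) is abelian:
   for all x, y in G_S the cosets commute, i.e. (xy)(yx)^{-1} in N_S. *)
Definition goursat_quotient_abelian (G : prodG -> Prop) (S : {set 'I_n})
  : Prop :=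
  forall x y, in_GS G S x -> in_GS G S y ->
    in_NS G S (pmul (pmul x y) (pinv (pmul y x))).

(* G has abelian entanglements w.r.t. G_1 x ... x G_n: Q_P is abelian for
   every partition P = {S, T} of {1..n} into two nonempty sets. *)
Definition abelian_entanglements (G : prodG -> Prop) : Prop :=
  forall S : {set 'I_n}, S != set0 -> S != setT ->
    goursat_quotient_abelian G S.

End Product.

(* For S = {j} the Goursat quotient is abelian iff every commutator of G_j,
   padded with 1 outside j, lies in G (by surjectivity every element of G_j is
   the j-th coordinate of some element of G).  For arbitrary S, a commutator
   restricted to S and padded with 1 outside S is the product over j in S of
   such single-coordinate elements, hence lies in G. *)
From mathcomp Require Import all_boot.

Section GroupFacts.
Variable K : group.

Lemma gmulVr (x : K) : gmul x (ginv x) = gone K.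
Proof.
set y := gmul x (ginv x).
have yy : gmul y y = y by rewrite /y -gmulA [gmul (ginv x) _]gmulA gmulV gmul1.
by rewrite -[y]gmul1 -(gmulV y) -gmulA yy.
Qed.

Lemma gmul1r (x : K) : gmul x (gone K) = x.
Proof. by rewrite -(gmulV x) gmulA gmulVr gmul1. Qed.

End GroupFacts.

Section Entanglements.
Variables (n : nat) (Gs : 'I_n -> group) (G : prodG Gs -> Prop).
Hypothesis subG : is_subgroup G.

Definition pcomm (x y : prodG Gs) : prodG Gs := pmul (pmul x y) (pinv (pmul y x)).

Lemma in_GS_pcomm S x y :
  in_GS G S x -> in_GS G S y -> in_GS G S (pcomm x y).
Proof.
case: subG => _ GM GV [gx [Gx Ax]] [gy [Gy Ay]].
exists (pcomm gx gy); split; first by apply: (GM); [apply: GM | apply: GV; apply: GM].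
by move=> i Si; rewrite /pcomm /pmul /pinv !Ax ?Ay.
Qed.

Lemma in_NS_setT x : in_GS G setT x -> in_NS G setT x.
Proof. by case=> g [Gg Ag]; exists g; split => // i; rewrite setCT inE. Qed.

Lemma goursat_quotient_abelian_setT : goursat_quotient_abelian G setT.
Proof. by move=> x y Hx Hy; apply/in_NS_setT/in_GS_pcomm. Qed.

Lemma in_NS_set0 x : in_NS G set0 x.
Proof. by case: subG => G1 _ _; exists (pone Gs); split => // i; rewrite inE. Qed.

Lemma in_NS_setU (S T : {set 'I_n}) x : [disjoint S & T] ->
  in_NS G S x -> in_NS G T x -> in_NS G (S :|: T) x.
Proof.
case: subG => _ GM _ dST [g [Gg Sg S'g]] [h [Gh Th T'h]].
exists (pmul g h); split; first exact: GM.
- move=> i; rewrite /pmul inE => /orP[Si | Ti].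
    by rewrite Sg // T'h ?gmul1r // inE (disjointFr dST).
  by rewrite Th // S'g ?gmul1 // inE (disjointFl dST).
- move=> i; rewrite !inE negb_or => /andP[S'i T'i].
  by rewrite /pmul S'g ?T'h ?gmul1 ?inE.
Qed.

Lemma in_NS_from_set1 (S : {set 'I_n}) x :
  (forall j, j \in S -> in_NS G [set j] x) -> in_NS G S x.
Proof.
rewrite -[S]set_enum -/[set:: enum S]; move: (enum S) => s.
elim: s => [|j s IHs] Hs; first by rewrite set_nil; apply: in_NS_set0.
rewrite set_cons in Hs *.
have IH : in_NS G [set:: s] x by apply: IHs => i si; apply: Hs; rewrite setU1r.
case: (boolP (j \in [set:: s])) => [sj | s'j].
  by rewrite (setUidPr _) // sub1set.
by apply: in_NS_setU; rewrite ?disjoints1 //; apply: Hs; rewrite setU11.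
Qed.

Hypothesis surjG : forall (i : 'I_n) (g : Gs i), exists x, G x /\ x i = g.

Lemma in_GS_set1 j x : in_GS G [set j] x.
Proof.
have [g [Gg gj]] := surjG j (x j).
by exists g; split => // i; rewrite inE => /eqP ->.
Qed.

Lemma goursat_quotient_abelian_from_set1 :
  (forall j, goursat_quotient_abelian G [set j]) ->
  forall S, goursat_quotient_abelian G S.
Proof.
move=> Qab S x y _ _; apply: in_NS_from_set1 => j _.
exact: Qab (in_GS_set1 j x) (in_GS_set1 j y).
Qed.

End Entanglements.

Theorem corollary2p5 (n : nat) (Gs : 'I_n -> group) (G : prodG Gs -> Prop)
    (HG : is_subgroup G)
    (Hsurj : forall (i : 'I_n) (g : Gs i), exists x, G x /\ x i = g) :
  abelian_entanglements G <->
  (forall j : 'I_n, goursat_quotient_abelian G [set j]).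
Proof.
split=> [AE j | Qab S _ _]; last exact: goursat_quotient_abelian_from_set1.
have [-> | jT] := eqVneq [set j] setT; first exact: goursat_quotient_abelian_setT.
by apply: AE jT; apply/set0Pn; exists j; rewrite inE.
Qed.
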